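(* Let $\lambda,\lambda'\in\mathbb{C}^*$, $\alpha,\alpha'\in\mathbb{C}$, $t,t'\in\{1,-1\}$. If $\alpha\neq\alpha'$ or $t\neq t'$, then $\mathcal{M}_t(\lambda,\alpha)\not\cong\mathcal{M}_{t'}(\lambda',\alpha')$ as $\mathcal{T}$-modules.
   Context: The twisted $N=2$ superconformal algebra $\mathcal{T}$ is the Lie superalgebra over $\mathbb{C}$ with basis $\{L_m, I_r, G_p\mid m\in\mathbb{Z}, r\in\frac12+\mathbb{Z}, p\in\frac12\mathbb{Z}\}$, even part spanned by the $L_m,I_r$, odd part by the $G_p$, only nonzero brackets $[L_m,L_n]=(m-n)L_{m+n}$, $[L_m,I_r]=-rI_{m+r}$, $[L_m,G_p]=(\frac m2-p)G_{m+p}$, $[I_r,G_p]=G_{r+p}$, $[G_p,G_q]=(-1)^{2p}2L_{p+q}$ if $p+q\in\mathbb{Z}$, $[G_p,G_q]=(-1)^{2p+1}(p-q)I_{p+q}$ if $p+q\in\frac12+\mathbb{Z}$. For $p\in\frac12\mathbb{Z}$, $\lambda^p$ means $(\lambda^{1/2})^{2p}$ for a fixed square root. For $\lambda\in\mathbb{C}^*,\alpha\in\mathbb{C},t=\pm1$, $\mathcal{M}_t(\lambda,\alpha)$ is the $\mathbb{Z}_2$-graded space $\mathbb{C}[\partial^2]\oplus\partial\mathbb{C}[\partial^2]$ ($\partial$ a formal variable; even part $\mathbb{C}[\partial^2]$, odd part $\partial\mathbb{C}[\partial^2]$) with action ($m\in\mathbb{Z}$, $r\in\frac12+\mathbb{Z}$,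 $p\in\frac12\mathbb{Z}$): $L_mf(\partial^2)=\lambda^m(\partial^2+m\alpha)f(\partial^2+m)$, $L_m\partial f(\partial^2)=\lambda^m(\partial^2+m(\alpha+\frac12))\partial f(\partial^2+m)$, $I_rf(\partial^2)=-2t^{2r}\lambda^{r}\alpha f(\partial^2+r)$, $I_r\partial f(\partial^2)=t^{2r}\lambda^{r}(1-2\alpha)\partial f(\partial^2+r)$, $G_pf(\partial^2)=t^{2p}\lambda^p\partial f(\partial^2+p)$, $G_p\partial f(\partial^2)=(-t)^{2p}\lambda^p(\partial^2+2p\alpha)f(\partial^2+p)$. *)

From HB Require Import structures.
From mathcomp Require Import all_boot all_order all_algebra.
From mathcomp Require Import complex.
From mathcomp Require Import reals.
Set Implicit Arguments. Unset Strict Implicit. Unset Printing Implicit Defensive.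
Import Order.TTheory GRing.Theory Num.Theory.
Local Open Scope ring_scope.

(* Basis of the twisted N=2 superconformal algebra T, with doubled indices:
   TL m      = L_m            (m in Z)
   TI n      = I_(n + 1/2)    (n in Z, so r = n + 1/2 ranges over 1/2 + Z)
   TG k      = G_(k/2)        (k in Z, so p = k/2 ranges over (1/2)Z)     *)
Variant Tbasis := TL of int | TI of int | TG of int.

Section Module.
Variable C : fieldType.

(* Elements of M_t(lam,alpha) = C[d^2] (+) d C[d^2]: the pair (f, g) stands
   for f(d^2) + d g(d^2); f is the even part, g the odd part. *)
Definition Mspace := ({poly C} * {poly C})%type.

Definition pshift (c : C) (f : {poly C}) : {poly C} := f \Po ('X + c%:P).

Definition half : C := 2%:R^-1.

(* The action of the basis element on M_t(lam, alpha), where mu = lam^(1/2)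
   is the fixed square root, so lam^p = mu^(2p) (integer power). *)
Definition Mact (mu alpha t : C) (b : Tbasis) (v : Mspace) : Mspace :=
  let f := v.1 in let g := v.2 in
  match b with
  | TL m =>
      (mu ^ (2 * m) *: (('X + (m%:~R * alpha)%:P) * pshift m%:~R f),
       mu ^ (2 * m) *: (('X + (m%:~R * (alpha + half))%:P) * pshift m%:~R g))
  | TI n =>
      let r := n%:~R + half in
      let c := t ^ (2 * n + 1) * mu ^ (2 * n + 1) in
      ((- 2%:R * c * alpha) *: pshift r f,
       (c * (1 - 2%:R * alpha)) *: pshift r g)
  | TG k =>
      let p := k%:~R * half in
      (((- t) ^ k * mu ^ k) *: (('X + (k%:~R * alpha)%:P) * pshift p g),
       (t ^ k * mu ^ k) *: pshift p f)
  end.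

(* Isomorphism of T-modules: an even (parity-preserving) linear bijection
   commuting with the action of every basis element (hence of all of T). *)
Definition lin_poly (h : {poly C} -> {poly C}) : Prop :=
  forall (a : C) (u v : {poly C}), h (a *: u + v) = a *: h u + h v.

Definition T_isomorphic (A B : Tbasis -> Mspace -> Mspace) : Prop :=
  exists (h0 h1 : {poly C} -> {poly C}),
    [/\ lin_poly h0, lin_poly h1, bijective h0, bijective h1 &
        forall (b : Tbasis) (v : Mspace),
          (h0 (A b v).1, h1 (A b v).2) = B b (h0 v.1, h1 v.2)].
End Module.

From HB Require Import structures.
From mathcomp Require Import all_boot all_order all_algebra.
From mathcomp Require Import complex.
From mathcomp Require Import reals.
From mathcomp Require Import ring.
Import Order.TTheory GRing.Theory Num.Theory.
Local Open Scope ring_scope.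

(* An even isomorphism commutes with L_0, which multiplies both parities by
   d^2; a bijective linear endomorphism of C[x] commuting with multiplication
   by x is a nonzero scalar.  Once the isomorphism is a pair of scalars,
   comparing L_1 and I_(1/2) on constants reads off lam, lam alpha and
   t lam^(1/2), so these determine the module. *)

Section MactInvariants.
Variable C : fieldType.
Implicit Types (mu alpha t a : C) (f g : {poly C}).

Lemma pshiftC (r a : C) : pshift r a%:P = a%:P.
Proof. exact: comp_polyC. Qed.

Lemma Mact_TL0 mu alpha t (v : Mspace C) :
  Mact mu alpha t (TL 0) v = ('X * v.1, 'X * v.2).
Proof.
by rewrite /Mact /pshift /= mulr0 expr0z !scale1r mulr0z !mul0r !addr0 !comp_polyXr.
Qed.

Lemma Mact_TL1_even_const mu alpha t a g :
  (Mact mu alpha t (TL 1) (a%:P, g)).1 = (mu ^+ 2 * a) *: ('X + alpha%:P).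
Proof. by rewrite /Mact /= pshiftC mulr1 mul1r mulrC mul_polyC scalerA. Qed.

Lemma Mact_TI0_even_const mu alpha t a g :
  (Mact mu alpha t (TI 0) (a%:P, g)).1 = (- 2%:R * (t * mu) * alpha * a)%:P.
Proof. by rewrite /Mact /= pshiftC mulr0 add0r !expr1z -mul_polyC -polyCM. Qed.

Lemma Mact_TI0_odd_const mu alpha t f a :
  (Mact mu alpha t (TI 0) (f, a%:P)).2 = (t * mu * (1 - 2%:R * alpha) * a)%:P.
Proof. by rewrite /Mact /= pshiftC mulr0 add0r !expr1z -mul_polyC -polyCM. Qed.

Lemma lin_poly0 (h : {poly C} -> {poly C}) : lin_poly h -> h 0 = 0.
Proof.
move=> hlin; have := hlin 1 0 0; rewrite !scale1r addr0 -{1}[h 0]addr0.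
by move/addrI.
Qed.

Section CommutingWithX.
Variable h : {poly C} -> {poly C}.
Hypothesis hlin : lin_poly h.
Hypothesis h_commX : forall f, h ('X * f) = 'X * h f.

Lemma commX_mulE f : h f = f * h 1.
Proof.
elim/poly_ind: f => [|f a IHf]; first by rewrite lin_poly0 // mul0r.
have hC : h a%:P = a%:P * h 1.
  by rewrite mul_polyC -alg_polyC -[a%:A]addr0 hlin lin_poly0 // addr0.
rewrite -{1}[f * 'X]scale1r hlin scale1r (mulrC f 'X) h_commX hC IHf.
by rewrite mulrDl mulrA.
Qed.

Lemma commX_bij_scale : bijective h -> exists2 a, a != 0 & forall f, h f = a *: f.
Proof.
case=> g _ hK.
have : h 1 \is a GRing.unit.
  by apply/unitrPr; exists (g 1); rewrite mulrC -commX_mulE hK.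
rewrite poly_unitE unitfE => /andP[/eqP size_h1 h1_neq0].
have /size1_polyC h1E : (size (h 1) <= 1)%N by rewrite size_h1.
exists (h 1)`_0 => // f.
by rewrite commX_mulE {1}h1E mulrC mul_polyC.
Qed.
End CommutingWithX.

Lemma Mact_iso_scale mu alpha t mu' alpha' t' :
  T_isomorphic (Mact mu alpha t) (Mact mu' alpha' t') ->
  exists a0 a1 : C, [/\ a0 != 0, a1 != 0 &
    forall b f g,
      a0 *: (Mact mu alpha t b (f, g)).1 = (Mact mu' alpha' t' b (a0 *: f, a1 *: g)).1 /\
      a1 *: (Mact mu alpha t b (f, g)).2 = (Mact mu' alpha' t' b (a0 *: f, a1 *: g)).2].
Proof.
case=> h0 [h1 [h0_lin h1_lin h0_bij h1_bij h_comm]].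
have h_commX f : h0 ('X * f) = 'X * h0 f /\ h1 ('X * f) = 'X * h1 f.
  by have := h_comm (TL 0) (f, f); rewrite !Mact_TL0 => -[-> ->].
have [a0 a0_neq0 h0E] := @commX_bij_scale h0 h0_lin (fun f => (h_commX f).1) h0_bij.
have [a1 a1_neq0 h1E] := @commX_bij_scale h1 h1_lin (fun f => (h_commX f).2) h1_bij.
exists a0, a1; split=> // b f g; rewrite -!h0E -!h1E.
by split; [apply: (congr1 fst (h_comm b (f, g))) | apply: (congr1 snd (h_comm b (f, g)))].
Qed.

Lemma scale_XaddC_inj (c c' a a' : C) :
  c *: ('X + a%:P) = c' *: ('X + a'%:P) -> c = c' /\ c * a = c' * a'.
Proof.
move=> E; split; [move: (congr1 (coefp 1) E) | move: (congr1 (coefp 0) E)];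
  by rewrite /= !coefZ !coefD !coefX !coefC /= ?addr0 ?add0r ?mulr1 ?mulr0.
Qed.

Lemma Mact_iso_params mu alpha t mu' alpha' t' :
  T_isomorphic (Mact mu alpha t) (Mact mu' alpha' t') ->
  [/\ mu ^+ 2 = mu' ^+ 2, mu ^+ 2 * alpha = mu' ^+ 2 * alpha' & t * mu = t' * mu'].
Proof.
move=> /Mact_iso_scale[a0 [a1 [a0_neq0 a1_neq0 h_comm]]].
have [L1_X L1_const] :
    a0 * mu ^+ 2 = mu' ^+ 2 * a0 /\ a0 * mu ^+ 2 * alpha = mu' ^+ 2 * a0 * alpha'.
  have := (h_comm (TL 1) 1%:P 0).1.
  rewrite Mact_TL1_even_const scale_polyC Mact_TL1_even_const scalerA !mulr1.
  exact: scale_XaddC_inj.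
have I_even : - 2%:R * (t * mu) * alpha = - 2%:R * (t' * mu') * alpha'.
  apply: (mulfI a0_neq0); rewrite [RHS]mulrC.
  have := (h_comm (TI 0) 1%:P 0).1.
  rewrite Mact_TI0_even_const !scale_polyC Mact_TI0_even_const !mulr1.
  exact: polyC_inj.
have I_odd : t * mu * (1 - 2%:R * alpha) = t' * mu' * (1 - 2%:R * alpha').
  apply: (mulfI a1_neq0); rewrite [RHS]mulrC.
  have := (h_comm (TI 0) 0 1%:P).2.
  rewrite Mact_TI0_odd_const !scale_polyC Mact_TI0_odd_const !mulr1.
  exact: polyC_inj.
split; first by apply: (mulfI a0_neq0); ring: L1_X.
  by apply: (mulfI a0_neq0); ring: L1_const.
(* Odd minus even relation isolates t mu without dividing by 2, so no
   assumption on the characteristic is needed. *)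
apply/eqP; rewrite -subr_eq0.
have -> : t * mu - t' * mu' = t * mu * (1 - 2%:R * alpha) - t' * mu' * (1 - 2%:R * alpha')
    - (- 2%:R * (t * mu) * alpha - - 2%:R * (t' * mu') * alpha') by ring.
by rewrite I_even I_odd !subrr.
Qed.
End MactInvariants.

Theorem corollary6p6 (R : realType) (sq : R[i] -> R[i])
  (hsq : forall z : R[i], sq z ^+ 2 = z)
  (lam lam' alpha alpha' t t' : R[i]) :
  lam != 0 -> lam' != 0 ->
  (t = 1 \/ t = -1) -> (t' = 1 \/ t' = -1) ->
  (alpha <> alpha' \/ t <> t') ->
  ~ T_isomorphic (Mact (sq lam) alpha t) (Mact (sq lam') alpha' t').
Proof.
move=> lam_neq0 _ _ _ params_neq /Mact_iso_params[mu2E mu2_alphaE t_muE].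
have lamE : lam = lam' by rewrite -(hsq lam) mu2E hsq.
have mu_neq0 : sq lam != 0.
  by apply: contra lam_neq0 => /eqP mu0; rewrite -(hsq lam) mu0 expr2 mul0r.
rewrite -lamE in mu2_alphaE t_muE.
case: params_neq; apply.
  exact: mulfI (expf_neq0 2 mu_neq0) _ _ mu2_alphaE.
exact: mulIf mu_neq0 _ _ t_muE.
Qed.
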